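(* Let $M,N,Q$ be positive integers with $N\le M$, let $S=\{\vec b\in\mathbb{F}_2^M: H(\vec b)=N\}$, let $\mathbf{G}\in\mathbb{F}_2^{Q\times M}$ be such that $\vec b\mapsto\mathbf{G}\vec b$ is injective on $S$, let $\vec a,\vec c\in\mathbb{F}_2^M$, and let $T\subseteq S$. Define the operators on $(\mathbb{C}^2)^{\otimes Q}$ $$A_{\pm}=X^{\mathbf{G}\vec a}\sum_{\vec b\in T}(-1)^{\vec c\cdot\vec b}\left(P^{\mathbf{G}\vec b}\pm P^{\mathbf{G}(\vec a\oplus\vec b)}\right).$$ Then each of $A_+$ and $A_-$ is a linear combination of pairwise commuting Pauli strings (elements of $\{I,X,Y,Z\}^{\otimes Q}$); in particular each can be measured in a single (Clifford) measurement basis.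
   Context: For $\vec v\in\mathbb{F}_2^Q$: $X^{\vec v}=\prod_{m=1}^Q\sigma_{x,m}^{\vec v[m]}$ (so $X^{\vec v}|\vec u\rangle=|\vec u\oplus\vec v\rangle$), and $P^{\vec v}=\prod_{m=1}^Q\frac{1+(-1)^{\vec v[m]}\sigma_{z,m}}{2}=|\vec v\rangle\langle\vec v|$ is the projector onto the computational basis state $|\vec v\rangle$. $H(\cdot)$ is Hamming weight, $\oplus$ is bitwise addition mod 2 and $\vec c\cdot\vec b$ is the mod-2 inner product. The operators $A_\pm$ are the (anti-)Hermitian parts (up to a factor) of a linearly encoded fermionic operator $\mathcal{E}(\hat O)=X^{\mathbf{G}\vec a}\sum_{\vec b\in T}(-1)^{\vec c\cdot\vec b}P^{\mathbf{G}\vec b}$. *)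

(* Operators on (C^2)^{\otimes Q} are square complex matrices
   (complex numbers = algC) indexed by computational basis states
   |u>, u in F_2^Q (= 'cV['F_2]_Q), via enum_val. *)
From HB Require Import structures.
From mathcomp Require Import all_boot all_order all_algebra all_field.
Set Implicit Arguments. Unset Strict Implicit. Unset Printing Implicit Defensive.
Import Order.TTheory GRing.Theory Num.Theory.
Local Open Scope ring_scope.

Inductive pauli := PI | PX | PY | PZ.

Definition dimQ (Q : nat) : nat := #|{: 'cV['F_2]_Q}|.
Definition op (Q : nat) := 'M[algC]_(dimQ Q).

Definition ket (Q : nat) (i : 'I_(dimQ Q)) : 'cV['F_2]_Q := enum_val i.

(* matrix entry <v| sigma |u> of a single-qubit Pauli *)
Definition pauli1 (p : pauli) (v u : 'F_2) : algC :=
  match p with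
  | PI => (v == u)%:R
  | PX => (v != u)%:R
  | PZ => if v == u then (if u == 0 then 1 else -1) else 0
  | PY => if v == u then 0 else (if u == 0 then 'i else - 'i)
  end.

Definition pauli_string_mx (Q : nat) (p : 'I_Q -> pauli) : op Q :=
  \matrix_(i, j) \prod_(m < Q) pauli1 (p m) (ket i m ord0) (ket j m ord0).

Definition Xop (Q : nat) (v : 'cV['F_2]_Q) : op Q :=
  \matrix_(i, j) (ket i == ket j + v)%:R.

Definition Proj (Q : nat) (v : 'cV['F_2]_Q) : op Q :=
  \matrix_(i, j) ((ket i == v) && (ket j == v))%:R.

Definition hamming (M : nat) (b : 'cV['F_2]_M) : nat := #|[set i | b i ord0 != 0]|.

Definition weight_set (M N : nat) : {set 'cV['F_2]_M} :=
  [set b | hamming b == N].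

Definition dot2 (M : nat) (c b : 'cV['F_2]_M) : 'F_2 := (c^T *m b) ord0 ord0.

Definition sgn2 (x : 'F_2) : algC := if x == 0 then 1 else -1.

Definition Apm (Q M : nat) (s : bool) (G : 'M['F_2]_(Q, M))
    (a c : 'cV['F_2]_M) (T : {set 'cV['F_2]_M}) : op Q :=
  Xop (G *m a) *m
    \sum_(b in T) (sgn2 (dot2 c b) *:
        (Proj (G *m b) + (if s then 1 else -1) *: Proj (G *m (a + b)))).

Definition commuting_pauli_comb (Q : nat) (A : op Q) : Prop :=
  exists (k : nat) (p : 'I_k -> 'I_Q -> pauli) (coef : 'I_k -> algC),
    (forall i j : 'I_k,
        pauli_string_mx (p i) *m pauli_string_mx (p j)
        = pauli_string_mx (p j) *m pauli_string_mx (p i))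
    /\ A = \sum_(i < k) coef i *: pauli_string_mx (p i).

From HB Require Import structures.
From mathcomp Require Import all_boot all_order all_algebra all_field.
From mathcomp Require Import ring.
Import Order.TTheory GRing.Theory Num.Theory.
Local Open Scope ring_scope.

(* A_+/- is X^(Ga) times a diagonal operator.  Expanding each projector in the
   Z-basis, |w><w| = 2^-Q sum_z (-1)^(z.w) Z^z, the coefficient of Z^z in
   P^(Gb) +/- P^(G(a+b)) acquires the factor 1 +/- (-1)^(z.Ga), so only the z
   with (-1)^(z.Ga) = +/-1 survive.  Each X^v Z^z is a Pauli string up to a
   phase, and the Weyl relation Z^z X^v = (-1)^(z.v) X^v Z^z shows that
   X^v Z^z and X^v Z^z' commute whenever z.v = z'.v. *)

Lemma pchar_F2 : 2 \in [pchar 'F_2].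
Proof. exact: pchar_Fp. Qed.

Lemma F2_cases (x : 'F_2) : x = 0 \/ x = 1.
Proof. by case: x => [[|[|k]] lt_k2]; [left|right|]; try apply: val_inj. Qed.

Lemma sgn2_0 : sgn2 0 = 1. Proof. by rewrite /sgn2 eqxx. Qed.

Lemma sgn2D (x y : 'F_2) : sgn2 (x + y) = sgn2 x * sgn2 y.
Proof.
by case: (F2_cases x) => ->; case: (F2_cases y) => ->; rewrite /sgn2 /= ?mulN1r ?opprK ?mul1r.
Qed.

Lemma sgn2_negb (s : bool) : sgn2 (~~ s)%:R = if s then 1 else -1.
Proof. by case: s. Qed.

Lemma add1_sgn2 (x : 'F_2) : 1 + sgn2 x = (x == 0)%:R *+ 2.
Proof. by case: (F2_cases x) => ->; rewrite /sgn2 /= ?mul0rn ?mulr2n ?subrr. Qed.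

Lemma addF2_eq0 (x y : 'F_2) : (x + y == 0) = (x == y).
Proof. by rewrite addr_eq0 oppr_pchar2 ?pchar_F2. Qed.

Lemma addmxF2_eq0 m p (A B : 'M['F_2]_(m, p)) : (A + B == 0) = (A == B).
Proof.
rewrite addr_eq0; congr (_ == _); apply/matrixP => i k.
by rewrite mxE oppr_pchar2 ?pchar_F2.
Qed.

Section Qubits.
Variable Q : nat.
Implicit Types (u v w z : 'cV['F_2]_Q) (i j : 'I_(dimQ Q)).

Local Notation n := (dimQ Q)%:R.

Lemma dot2E z u : dot2 z u = \sum_m z m ord0 * u m ord0.
Proof. by rewrite /dot2 mxE; apply: eq_bigr => m _; rewrite mxE. Qed.

Lemma dot2Dl z u w : dot2 (u + w) z = dot2 u z + dot2 w z.
Proof. by rewrite /dot2 linearD mulmxDl mxE. Qed.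

Lemma dot2Dr z u w : dot2 z (u + w) = dot2 z u + dot2 z w.
Proof. by rewrite /dot2 mulmxDr mxE. Qed.

Lemma dot2_delta (m : 'I_Q) u : dot2 (delta_mx m ord0) u = u m ord0.
Proof. by rewrite /dot2 trmx_delta -rowE mxE. Qed.

Lemma sgn2_dot2_0 z : sgn2 (dot2 z 0) = 1.
Proof. by rewrite /dot2 mulmx0 mxE sgn2_0. Qed.

Lemma dimQ_neq0 : n != 0 :> algC.
Proof. by rewrite pnatr_eq0 -lt0n; apply/card_gt0P; exists 0. Qed.

Lemma sum_sgn2_dot2 u : \sum_z sgn2 (dot2 z u) = (u == 0)%:R * n.
Proof.
have [->|u_neq0] := eqVneq u 0.
  by rewrite mul1r (eq_bigr (fun _ => 1)) ?sumr_const // => z _; rewrite sgn2_dot2_0.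
have [m um] : exists m, u m ord0 != 0.
  apply/existsP; apply: contraR u_neq0 => /existsPn u0; apply/eqP/matrixP => k l.
  by rewrite (ord1 l) mxE; apply/eqP/negPn/u0.
have flip z : sgn2 (dot2 (z + delta_mx m ord0) u) = - sgn2 (dot2 z u).
  rewrite dot2Dl sgn2D dot2_delta.
  by case: (F2_cases (u m ord0)) um => -> //; rewrite /sgn2 /= mulrN1.
set S := \sum_z _; have S_opp : S = - S.
  rewrite {1}/S (reindex_inj (addIr (delta_mx m ord0))) /= -sumrN.
  by apply: eq_bigr => z _; rewrite flip.
have: S *+ 2 == 0 by rewrite mulr2n {1}S_opp addNr.
by rewrite mul0r mulrn_eq0 => /eqP.
Qed.

Lemma ket_eq i j : (ket i == ket j) = (i == j).
Proof. exact: (inj_eq enum_val_inj). Qed.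

Definition Zop z : op Q := diag_mx (\row_j sgn2 (dot2 z (ket j))).

Definition XZop v z : op Q := Xop v *m Zop z.

Lemma XZopE v z i j : XZop v z i j = (ket i == ket j + v)%:R * sgn2 (dot2 z (ket j)).
Proof. by rewrite /XZop /Zop mul_mx_diag !mxE. Qed.

Lemma Zop_mul z z' : Zop z *m Zop z' = Zop (z + z').
Proof. by rewrite mulmx_diag; congr diag_mx; apply/rowP => j; rewrite !mxE dot2Dl sgn2D. Qed.

Lemma Zop_Xop z v : Zop z *m Xop v = sgn2 (dot2 z v) *: XZop v z.
Proof.
apply/matrixP => i j; rewrite /XZop /Zop mul_diag_mx mul_mx_diag !mxE.
have [->|_] := eqVneq (ket i) (ket j + v); last by rewrite !(mulr0, mul0r).
by rewrite dot2Dr sgn2D; ring.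
Qed.

Lemma XZop_mul v z z' :
  XZop v z *m XZop v z' = sgn2 (dot2 z v) *: (Xop v *m Xop v *m Zop (z + z')).
Proof.
rewrite /XZop mulmxA -(mulmxA (Xop v) (Zop z) (Xop v)) Zop_Xop.
by rewrite -scalemxAr -scalemxAl /XZop -Zop_mul !mulmxA.
Qed.

Lemma XZop_comm v z z' : dot2 z v = dot2 z' v ->
  XZop v z *m XZop v z' = XZop v z' *m XZop v z.
Proof. by move=> zv_eq; rewrite [LHS]XZop_mul [RHS]XZop_mul zv_eq (addrC z z'). Qed.

Lemma Proj_Zop_expansion w : Proj w = n^-1 *: \sum_z sgn2 (dot2 z w) *: Zop z.
Proof.
apply/matrixP => i j; rewrite !mxE summxE.
under eq_bigr do rewrite !mxE.
have [<-|ij] := eqVneq i j; last first.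
  rewrite big1 ?mulr0 => [|z _]; last by rewrite mulr0n mulr0.
  by case: (ket i =P w) => [ki|]; case: (ket j =P w) => [kj|] //; rewrite -ket_eq ki kj eqxx in ij.
under eq_bigr do rewrite mulr1n -sgn2D -dot2Dr.
by rewrite andbb sum_sgn2_dot2 addmxF2_eq0 eq_sym mulrCA mulVf ?dimQ_neq0 ?mulr1.
Qed.

Definition pauli_letter (x z : 'F_2) : pauli :=
  if x == 0 then (if z == 0 then PI else PZ) else (if z == 0 then PX else PY).

(* sigma_y = i sigma_x sigma_z is the source of the phase of a Y letter *)
Definition letter_phase (x z : 'F_2) : algC := if (x != 0) && (z != 0) then 'i else 1.

Lemma pauli1_letter (x z v u : 'F_2) :
  pauli1 (pauli_letter x z) v u = letter_phase x z * ((v == x + u)%:R * sgn2 (z * u)).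
Proof.
rewrite /pauli_letter /letter_phase /sgn2.
by case: (F2_cases x) => ->; case: (F2_cases z) => ->; case: (F2_cases v) => ->;
  case: (F2_cases u) => ->; rewrite /= ?(mul1r, mulr1, mul0r, mulr0, mulrN1, mulrN, oppr0).
Qed.

Lemma prod_coord_eq u w : \prod_m (u m ord0 == w m ord0)%:R = (u == w)%:R :> algC.
Proof.
have [->|uw] := eqVneq u w; first by rewrite big1 // => m _; rewrite eqxx.
have [m um] : exists m, u m ord0 != w m ord0.
  apply/existsP; apply: contraR uw => /existsPn uw; apply/eqP/matrixP => k l.
  by rewrite (ord1 l); apply/eqP/negPn/uw.
by rewrite (bigD1 m) //= (negbTE um) mul0r.
Qed.

Lemma prod_sgn2 z u : \prod_m sgn2 (z m ord0 * u m ord0) = sgn2 (dot2 z u).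
Proof. by rewrite dot2E (big_morph sgn2 sgn2D sgn2_0). Qed.

Definition xz_string v z (m : 'I_Q) : pauli := pauli_letter (v m ord0) (z m ord0).

Definition xz_phase v z : algC := \prod_m letter_phase (v m ord0) (z m ord0).

Lemma xz_phase_neq0 v z : xz_phase v z != 0.
Proof.
apply/prodf_neq0 => m _; rewrite /letter_phase.
by case: ifP => _; rewrite ?neq0Ci ?oner_neq0.
Qed.

Lemma pauli_string_XZ v z : pauli_string_mx (xz_string v z) = xz_phase v z *: XZop v z.
Proof.
apply/matrixP => i j; rewrite [RHS]mxE XZopE mxE.
have coordD m : v m ord0 + ket j m ord0 = (ket j + v) m ord0 by rewrite mxE addrC.
under eq_bigr do rewrite pauli1_letter coordD.
by rewrite !big_split /= prod_coord_eq prod_sgn2.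
Qed.

Lemma commuting_pauli_comb_XZ v (Z : {set 'cV['F_2]_Q}) (g : 'cV['F_2]_Q -> algC) :
  {in Z &, forall z z', dot2 z v = dot2 z' v} ->
  commuting_pauli_comb (\sum_(z in Z) g z *: XZop v z).
Proof.
move=> Zv_const; exists #|Z|, (fun k => xz_string v (enum_val k)).
exists (fun k => g (enum_val k) / xz_phase v (enum_val k)); split.
  move=> k l; rewrite !pauli_string_XZ -!scalemxAl -!scalemxAr !scalerA mulrC.
  by rewrite XZop_comm //; apply: Zv_const; apply: enum_valP.
rewrite big_enum_val; apply: eq_bigr => k _.
by rewrite pauli_string_XZ scalerA divfK ?xz_phase_neq0.
Qed.

Lemma Proj_pair_Zop_expansion w u (e : 'F_2) :
  Proj w + sgn2 e *: Proj (w + u)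
  = (2 / n) *: \sum_(z in [set z | dot2 z u == e]) sgn2 (dot2 z w) *: Zop z.
Proof.
rewrite !Proj_Zop_expansion !scaler_sumr -big_split [RHS]big_mkcond /=.
apply: eq_bigr => z _; rewrite inE !scalerA -scalerDl.
have -> : n^-1 * sgn2 (dot2 z w) + sgn2 e / n * sgn2 (dot2 z (w + u))
    = n^-1 * sgn2 (dot2 z w) * (1 + sgn2 (e + dot2 z u)) by rewrite dot2Dr !sgn2D; ring.
rewrite add1_sgn2 addF2_eq0 eq_sym.
by case: eqP => _ /=; rewrite ?mul0rn ?mulr0 ?scale0r //; congr (_ *: _); ring.
Qed.

Lemma Apm_XZ_expansion M s (G : 'M['F_2]_(Q, M)) (a c : 'cV['F_2]_M) (T : {set 'cV['F_2]_M}) :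
  Apm s G a c T = \sum_(z in [set z | dot2 z (G *m a) == (~~ s)%:R])
    (2 / n * \sum_(b in T) sgn2 (dot2 c b) * sgn2 (dot2 z (G *m b))) *: XZop (G *m a) z.
Proof.
rewrite /Apm -sgn2_negb.
under eq_bigr do rewrite mulmxDr [G *m a + _]addrC Proj_pair_Zop_expansion scalerA scaler_sumr.
rewrite exchange_big mulmx_sumr; apply: eq_bigr => z _.
under eq_bigr do rewrite scalerA.
rewrite -scaler_suml -scalemxAr; congr (_ *: _).
by rewrite mulr_sumr; apply: eq_bigr => b _; ring.
Qed.

End Qubits.

Theorem lemma3 (M N Q : nat) (G : 'M['F_2]_(Q, M)) (a c : 'cV['F_2]_M)
    (T : {set 'cV['F_2]_M}) :
  (0 < M)%N -> (0 < N)%N -> (0 < Q)%N -> (N <= M)%N ->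
  {in weight_set M N &, injective (fun b => G *m b)} ->
  T \subset weight_set M N ->
  forall s : bool, commuting_pauli_comb (Apm s G a c T).
Proof.
move=> _ _ _ _ _ _ s; rewrite Apm_XZ_expansion.
by apply: commuting_pauli_comb_XZ => z z'; rewrite !inE => /eqP-> /eqP->.
Qed.
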